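(* Let $A$ be a Banach algebra, let $X$ be a commutative Banach algebra which is also a Banach $A$-bimodule and satisfies $\bigcap_{\varphi\in\Delta(X)}\ker\varphi=\{0\}$, let $\psi:A\to X$ be a continuous algebra homomorphism, and let $D:A\to X$ be a bounded linear operator. Then the following are equivalent: (i) $D$ is a $\psi$-derivation, i.e. $D(ab)=D(a)\psi(b)+\psi(a)D(b)$ for all $a,b\in A$ (products taken in $X$); (ii) for every $\varphi\in\Delta(X)$, $\varphi\circ D$ is a $\varphi\circ\psi$-derivation, i.e. $(\varphi\circ D)(ab)=(\varphi\circ D)(a)\,(\varphi\circ\psi)(b)+(\varphi\circ\psi)(a)\,(\varphi\circ D)(b)$ for all $a,b\in A$; (iii) for every $\varphi\in\Delta(X)$, $\varphi\circ D$ is a $(\varphi,\psi)$-point derivation on $A$, i.e. $(\varphi\circ D)(ab)=\varphi(\psi(a))\,(\varphi\circ D)(b)+\varphi(\psi(b))\,(\varphi\circ D)(a)$ for all $a,b\in A$.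
   Context: $\Delta(X)$ denotes the set of all nonzero multiplicative linear functionals on the Banach algebra $X$. The condition $\bigcap_{\varphi\in\Delta(X)}\ker\varphi=\{0\}$ is the paper's notion of semisimplicity. *)

From mathcomp Require Import all_boot all_order all_algebra.
From mathcomp Require Import all_classical all_reals all_analysis.
From mathcomp Require Export complex.
Set Implicit Arguments.
Unset Strict Implicit.
Unset Printing Implicit Defensive.
Import Order.TTheory GRing.Theory Num.Theory.
Import numFieldNormedType.Exports.
Local Open Scope ring_scope.
Local Open Scope classical_set_scope.

Definition is_algebra_mul (K : numFieldType) (A : lmodType K)
    (mul : A -> A -> A) : Prop :=
  [/\ associative mul,
      (forall x y z, mul (x + y) z = mul x z + mul y z),
      (forall x y z, mul x (y + z) = mul x y + mul x z),
      (forall (c : K) x y, mul (c *: x) y = c *: mul x y) &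
      (forall (c : K) x y, mul x (c *: y) = c *: mul x y)].

Definition banach_algebra (K : numFieldType) (A : completeNormedModType K)
    (mul : A -> A -> A) : Prop :=
  is_algebra_mul mul /\ (forall a b, `|mul a b| <= `|a| * `|b|).

Definition commutative_banach_algebra (K : numFieldType)
    (X : completeNormedModType K) (mul : X -> X -> X) : Prop :=
  banach_algebra mul /\ commutative mul.

Definition banach_bimodule (K : numFieldType) (A : completeNormedModType K)
    (mulA : A -> A -> A) (X : completeNormedModType K)
    (lact : A -> X -> X) (ract : X -> A -> X) : Prop :=
  ((forall a b x, lact (a + b) x = lact a x + lact b x) /\
   (forall a x y, lact a (x + y) = lact a x + lact a y) /\
   (forall (c : K) a x, lact (c *: a) x = c *: lact a x /\
                        lact a (c *: x) = c *: lact a x)) /\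
  ((forall a x y, ract (x + y) a = ract x a + ract y a) /\
   (forall a b x, ract x (a + b) = ract x a + ract x b) /\
   (forall (c : K) a x, ract (c *: x) a = c *: ract x a /\
                        ract x (c *: a) = c *: ract x a)) /\
  ((forall a b x, lact a (lact b x) = lact (mulA a b) x) /\
   (forall a b x, ract (ract x a) b = ract x (mulA a b)) /\
   (forall a b x, ract (lact a x) b = lact a (ract x b))) /\
  (exists C : K, forall a x,
      `|lact a x| <= C * `|a| * `|x| /\ `|ract x a| <= C * `|a| * `|x|).

Definition mult_lin_functional (K : numFieldType) (X : lmodType K)
    (mul : X -> X -> X) (phi : X -> K) : Prop :=
  [/\ (forall x y, phi (x + y) = phi x + phi y),
      (forall (c : K) x, phi (c *: x) = c * phi x),
      (forall x y, phi (mul x y) = phi x * phi y) &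
      exists x, phi x != 0].

Definition Delta (K : numFieldType) (X : lmodType K) (mul : X -> X -> X)
  : set (X -> K) := [set phi | mult_lin_functional mul phi].

Definition semisimple (K : numFieldType) (X : lmodType K)
    (mul : X -> X -> X) : Prop :=
  \bigcap_(phi in Delta mul) (phi @^-1` [set 0]) = [set 0].

Definition algebra_hom (K : numFieldType) (A X : lmodType K)
    (mulA : A -> A -> A) (mulX : X -> X -> X) (psi : A -> X) : Prop :=
  linear psi /\ (forall a b, psi (mulA a b) = mulX (psi a) (psi b)).

Definition bounded_linear (K : numFieldType) (A X : normedModType K)
    (D : A -> X) : Prop :=
  linear D /\ exists M : K, forall a, `|D a| <= M * `|a|.

Definition psi_derivation (A : Type) (Y : zmodType) (mulA : A -> A -> A)
    (mulY : Y -> Y -> Y) (psi D : A -> Y) : Prop :=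
  forall a b, D (mulA a b) = mulY (D a) (psi b) + mulY (psi a) (D b).

Definition point_derivation (K : numFieldType) (A X : Type)
    (mulA : A -> A -> A) (phi : X -> K) (psi : A -> X) (d : A -> K) : Prop :=
  forall a b, d (mulA a b) = phi (psi a) * d b + phi (psi b) * d a.

(* Characters are ring homomorphisms into the scalars, so they carry a
   psi-derivation into X to a scalar one, and over the commutative scalar field
   the identities (ii) and (iii) coincide.  Conversely, semisimplicity says that
   the characters separate the points of X, so the derivation identity holds in
   X as soon as it holds after applying every character. *)
From mathcomp Require Import all_boot all_order all_algebra.
From mathcomp Require Import all_classical all_reals all_analysis.
From mathcomp Require Import complex.
Import Order.TTheory GRing.Theory Num.Theory.
Import numFieldNormedType.Exports.
Local Open Scope ring_scope.
Local Open Scope complex_scope.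

Lemma psi_derivation_comp {A : Type} {Y Z : zmodType} {mulA : A -> A -> A}
    {mulY : Y -> Y -> Y} {mulZ : Z -> Z -> Z} {f : Y -> Z} {psi D : A -> Y} :
  {morph f : x y / x + y} -> {morph f : x y / mulY x y >-> mulZ x y} ->
  psi_derivation mulA mulY psi D ->
  psi_derivation mulA mulZ (f \o psi) (f \o D).
Proof. by move=> fD fM dD a b /=; rewrite dD fD !fM. Qed.

Lemma psi_derivation_pointE {K : numFieldType} {A X : Type}
    {mulA : A -> A -> A} {phi : X -> K} {psi : A -> X} {d : A -> K} :
  psi_derivation mulA *%R (phi \o psi) d <-> point_derivation mulA phi psi d.
Proof.
by split=> dd a b; rewrite dd /= addrC [d _ * _]mulrC [_ * d b]mulrC.
Qed.

Lemma semisimple_separates {K : numFieldType} {X : lmodType K}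
    {mulX : X -> X -> X} {x y : X} :
  semisimple mulX -> (forall phi, Delta mulX phi -> phi x = phi y) -> x = y.
Proof.
move=> ssX phi_xy; apply/eqP; rewrite -subr_eq0; apply/eqP.
suff : (\bigcap_(phi in Delta mulX) (phi @^-1` [set 0]))%classic (x - y).
  by rewrite ssX.
move=> phi Dphi; have [phiD _ _ _] := Dphi.
have phiB : phi (x - y) = phi x - phi y.
  by apply: (addIr (phi y)); rewrite -phiD !subrK.
by rewrite /= phiB (phi_xy _ Dphi) subrr.
Qed.

Lemma psi_derivation_of_characters {K : numFieldType} {A : Type}
    {X : lmodType K} {mulA : A -> A -> A} {mulX : X -> X -> X}
    {psi D : A -> X} :
  semisimple mulX ->
  (forall phi, Delta mulX phi ->
     psi_derivation mulA *%R (phi \o psi) (phi \o D)) ->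
  psi_derivation mulA mulX psi D.
Proof.
move=> ssX dphi a b; apply: (semisimple_separates ssX) => phi Dphi.
have [phiD _ phiM _] := Dphi.
by rewrite phiD !phiM; exact: (dphi phi Dphi a b).
Qed.

Theorem theorem2p14 (R : realType)
    (A : completeNormedModType R[i]) (mulA : A -> A -> A)
    (X : completeNormedModType R[i]) (mulX : X -> X -> X)
    (lact : A -> X -> X) (ract : X -> A -> X)
    (psi D : A -> X) :
  banach_algebra mulA ->
  commutative_banach_algebra mulX ->
  banach_bimodule mulA lact ract ->
  semisimple mulX ->
  algebra_hom mulA mulX psi -> continuous psi ->
  bounded_linear D ->
  [<-> psi_derivation mulA mulX psi D;
       forall phi, Delta mulX phi ->
         psi_derivation mulA (@GRing.mul R[i]) (phi \o psi) (phi \o D);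
       forall phi, Delta mulX phi ->
         point_derivation mulA phi psi (phi \o D)].
Proof.
move=> _ _ _ ssX _ _ _; tfae.
- by move=> dD phi [phiD _ phiM _]; exact: (psi_derivation_comp phiD phiM dD).
- by move=> dphi phi Dphi; apply/psi_derivation_pointE; exact: (dphi phi Dphi).
- move=> dphi; apply: (psi_derivation_of_characters ssX) => phi Dphi.
  by apply/psi_derivation_pointE; exact: (dphi phi Dphi).
Qed.
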